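(* Let $\mathcal D=(A,D)$ be a dependence alphabet and $\mathcal L\subseteq\mathbb M(\mathcal D)$ rational. Then there are a dependence alphabet $\mathcal D'=(A',D')$ with $A\subseteq A'$ and $D=D'\cap(A\times A)$, a trace-pushdown system $\mathcal P=(Q,\Delta)$ over $\mathcal D'$, a configuration $c$ of $\mathcal P$ and a state $q\in Q$ such that $\mathcal L=\{[w]\mid w\in A^*,\ c\vdash^*_{\mathcal P}(q,[w])\}$.
   Context: A dependence alphabet is $\mathcal D=(A,D)$, $A$ finite, $D\subseteq A\times A$ reflexive and symmetric. $D(a)=\{c\mid(a,c)\in D\}$, $D(w)=\bigcup_{a\text{ in }w}D(a)$. Letters $a,b$ independent if $(a,b)\notin D$; $u\parallel v$ if every letter of $u$ is independent of every letter of $v$. $\sim$ least congruence on $A^*$ with $ab\sim ba$ for independent $a,b$; $\mathbb M(\mathcal D)=A^*/{\sim}$; $[w]$ class of $w$. A trace language $\mathcal L$ is rational if $\mathcal L=[L]$ for a regular $L\subseteq A^*$. Since $D=D'\cap(A\times A)$, for $w,w'\in A^*$ we have $w\sim_{\mathcal D}w'$ iff $w\sim_{\mathcal D'}w'$, so $\mathbb M(\mathcal D)$ is identified with the submonoid of $\mathbb M(\mathcal D')$ generated by $A$, and $[w]$ for $w\in A^*$ is read in either monoid. Pushdown system over $\mathcal D'$: $\mathcal P=(Q,\Delta)$, $Q$ finite, $\Delta\subseteq Q\times A'\times A'^*\times Q$ finite; configurations $Q\times\mathbb M(\mathcal D')$; $(p,s)\vdash_{\mathcal P}(q,t)$ iff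 there are $(p,a,w,q)\in\Delta$, $x\in A'^*$ with $s=[ax]$, $t=[wx]$; $\vdash^*_{\mathcal P}$ reflexive transitive closure. Trace-pushdown system: (P1) $D'(w)\subseteq D'(a)$ for all $(p,a,w,q)\in\Delta$; (P2') whenever $(p,a,v,q),(q,b,w,r)\in\Delta$ with $av\parallel bw$ (w.r.t. $D'$) there is $q'$ with $(p,b,w,q'),(q',a,v,r)\in\Delta$. *)

From mathcomp Require Import all_boot.
From Stdlib Require Import Relation_Operators.
Set Implicit Arguments. Unset Strict Implicit. Unset Printing Implicit Defensive.

Definition letter := nat.
Definition word := seq letter.

Definition dep_alphabet (A : seq letter) (D : rel letter) : Prop :=
  [/\ (forall a b, D a b -> (a \in A) && (b \in A)),
      {in A, forall a, D a a} &
      (forall a b, D a b -> D b a)].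

Definition swap1 (D : rel letter) (u v : word) : Prop :=
  exists (x y : word) (a b : letter),
    ~~ D a b /\ u = x ++ a :: b :: y /\ v = x ++ b :: a :: y.

Definition trace_eq (D : rel letter) : word -> word -> Prop :=
  clos_refl_sym_trans word (swap1 D).

Fixpoint nfa_acc (S : finType) (fin : pred S) (tr : S -> letter -> S -> bool)
    (s : S) (w : word) : bool :=
  match w with
  | [::] => fin s
  | a :: w' => [exists s', tr s a s' && nfa_acc fin tr s' w']
  end.

Definition regular (A : seq letter) (L0 : word -> Prop) : Prop :=
  exists (S : finType) (init fin : pred S) (tr : S -> letter -> S -> bool),
    forall w, L0 w <-> (all (mem A) w /\ exists2 s, init s & nfa_acc fin tr s w).

(* a trace language, given by the predicate "w represents a trace of L",
   is rational if it is [L0] for a regular L0 ⊆ A^* *)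
Definition rational_trace_lang (A : seq letter) (D : rel letter) (L : word -> Prop) : Prop :=
  exists L0, regular A L0 /\ forall w, L w <-> exists2 w0, L0 w0 & trace_eq D w0 w.

Definition rule (Q : finType) : Type := (Q * letter * word * Q)%type.

Definition pd_step (Q : finType) (D' : rel letter) (Delta : seq (rule Q))
    (c d : Q * word) : Prop :=
  exists p a w q (x : word),
    (p, a, w, q) \in Delta /\ c.1 = p /\ d.1 = q /\
    trace_eq D' c.2 (a :: x) /\ trace_eq D' d.2 (w ++ x).

(* configurations are considered up to trace equivalence; |-* is the
   reflexive-transitive closure of |- *)
Definition pd_reach (Q : finType) (D' : rel letter) (Delta : seq (rule Q)) :
    Q * word -> Q * word -> Prop :=
  clos_refl_trans (Q * word)
    (fun c d => (c.1 = d.1 /\ trace_eq D' c.2 d.2) \/ pd_step D' Delta c d).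

Definition indep_words (D : rel letter) (u v : word) : Prop :=
  forall a b, a \in u -> b \in v -> ~~ D a b.

Definition trace_pushdown (A' : seq letter) (D' : rel letter) (Q : finType)
    (Delta : seq (rule Q)) : Prop :=
  [/\
      (forall p a w q, (p, a, w, q) \in Delta -> (a \in A') && all (mem A') w),
      (forall p a w q, (p, a, w, q) \in Delta ->
         forall c e, c \in w -> e \in A' -> D' c e -> D' a e) &
      (forall p a v q b w r, (p, a, v, q) \in Delta -> (q, b, w, r) \in Delta ->
         indep_words D' (a :: v) (b :: w) ->
         exists q', ((p, b, w, q') \in Delta) && ((q', a, v, r) \in Delta))].

From mathcomp Require Import all_boot.
From Stdlib Require Import Relation_Operators.
Set Implicit Arguments. Unset Strict Implicit. Unset Printing Implicit Defensive.

(* Take an automaton for a regular representative language and a fresh letter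
   h that depends on every letter, itself included.  The pushdown system starts
   with stack h, guesses a final state, and then runs the automaton backwards:
   in state s' it may replace the top h by h b and move to s whenever s -b-> s',
   and it finally pops h in an initial state.  Every rule reads h, and h depends
   on everything, so (P1) holds and (P2') is vacuous.  Because h commutes with
   nothing it can be cancelled from the front of a trace, which makes
   "the stack is h v with v accepted from the current state" an invariant up to
   trace equivalence; hence the stacks left after popping h are exactly the
   traces of accepted words. *)

Lemma rem_cat (T : eqType) (x : T) s1 s2 :
  rem x (s1 ++ s2) = if x \in s1 then rem x s1 ++ s2 else s1 ++ rem x s2.
Proof.
elim: s1 => //= y s1 IH; rewrite in_cons eq_sym.
by case: eqP => //= _; rewrite IH; case: ifP.
Qed.

Lemma trace_eq_hom (D1 D2 : rel letter) (f : word -> word) :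
  (forall u v, swap1 D1 u v -> trace_eq D2 (f u) (f v)) ->
  forall u v, trace_eq D1 u v -> trace_eq D2 (f u) (f v).
Proof.
move=> Hf u v; elim=> [? ? /Hf //|?|? ? _ IH|? ? ? _ IH1 _ IH2].
- exact: rst_refl.
- exact: rst_sym.
- exact: rst_trans IH2.
Qed.

Section TraceEquivalence.

Variable D : rel letter.

Lemma trace_eq_refl u : trace_eq D u u.
Proof. exact: rst_refl. Qed.

Lemma trace_eq_sym u v : trace_eq D u v -> trace_eq D v u.
Proof. exact: rst_sym. Qed.

Lemma trace_eq_trans u v w : trace_eq D u v -> trace_eq D v w -> trace_eq D u w.
Proof. exact: rst_trans. Qed.

Lemma trace_eq_catl p u v : trace_eq D u v -> trace_eq D (p ++ u) (p ++ v).
Proof.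
apply: trace_eq_hom => _ _ [x [y [a [b [Dab [-> ->]]]]]].
by apply: rst_step; exists (p ++ x), y, a, b; rewrite !catA.
Qed.

Lemma trace_eq_subdep (D' : rel letter) u v :
  subrel D D' -> trace_eq D' u v -> trace_eq D u v.
Proof.
move=> sDD'; apply: (@trace_eq_hom D' D id) => _ _ [x [y [a [b [D'ab [-> ->]]]]]].
by apply: rst_step; exists x, y, a, b; split=> //; apply: contra D'ab; apply: sDD'.
Qed.

Lemma trace_eq_rem c u v : D c c -> trace_eq D u v -> trace_eq D (rem c u) (rem c v).
Proof.
move=> Dcc; apply: trace_eq_hom => _ _ [x [y [a [b [Dab [-> ->]]]]]].
rewrite !rem_cat; case: ifP => _.
  by apply: rst_step; exists (rem c x), y, a, b.
apply: trace_eq_catl => /=.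
case: (eqVneq a c) => [Eac|Nac].
  have Nbc : b != c by apply: contraNneq Dab => ->; rewrite Eac.
  by rewrite (negbTE Nbc); apply: trace_eq_refl.
case: (eqVneq b c) => _; first exact: trace_eq_refl.
by apply: rst_step; exists [::], (rem c y), a, b.
Qed.

Lemma trace_eq_cons_cancel c u v :
  D c c -> trace_eq D (c :: u) (c :: v) -> trace_eq D u v.
Proof. by move=> Dcc /(trace_eq_rem Dcc) /=; rewrite eqxx. Qed.

End TraceEquivalence.

Section PushdownReachability.

Variables (Q : finType) (D : rel letter) (Delta : seq (rule Q)).

Lemma pd_reach_trans c d e :
  pd_reach D Delta c d -> pd_reach D Delta d e -> pd_reach D Delta c e.
Proof. exact: rt_trans. Qed.

Lemma pd_reach_rule p a w q x :
  (p, a, w, q) \in Delta -> pd_reach D Delta (p, a :: x) (q, w ++ x).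
Proof.
move=> r; apply: rt_step; right; exists p, a, w, q, x.
by do 4 split=> //; apply: trace_eq_refl.
Qed.

Lemma pd_reach_trace_eq p u v : trace_eq D u v -> pd_reach D Delta (p, u) (p, v).
Proof. by move=> Huv; apply: rt_step; left. Qed.

Lemma pd_reach_inv (P : Q * word -> Prop) :
  (forall p u v, trace_eq D u v -> P (p, u) -> P (p, v)) ->
  (forall c d, pd_step D Delta c d -> P c -> P d) ->
  forall c d, pd_reach D Delta c d -> P c -> P d.
Proof.
move=> Peq Pstep c d; elim=> [{}c {}d [[Ecd Hcd]|/Pstep //]|//|? ? ? _ IH1 _ IH2].
- by case: c d Ecd Hcd => p u [_ v] /= <-; apply: Peq.
- by move=> /IH1 /IH2.
Qed.

End PushdownReachability.

Lemma trace_pushdown_dominant_top (A' : seq letter) (D' : rel letter) (Q : finType)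
    (Delta : seq (rule Q)) c :
  c \in A' -> {in A', forall e, D' c e} ->
  (forall p a w q, (p, a, w, q) \in Delta -> (a == c) && all (mem A') w) ->
  trace_pushdown A' D' Delta.
Proof.
move=> cA' Dc top; split.
- by move=> p a w q /top /andP[/eqP -> ->]; rewrite cA'.
- by move=> p a w q /top /andP[/eqP -> _] ? e _ /Dc.
- move=> p a v q b w r /top /andP[/eqP -> _] /top /andP[/eqP -> _] /(_ c c).
  by rewrite !mem_head Dc // => /(_ isT isT).
Qed.

Definition fresh_letter (A : seq letter) : letter := (\max_(a <- A) a).+1.

Lemma fresh_letter_notin A : fresh_letter A \notin A.
Proof.
by apply/negP => /(@leq_bigmax_seq _ A xpredT id) /(_ isT); rewrite ltnn.
Qed.

Section DominantLetter.

Variables (A : seq letter) (D : rel letter) (h : letter).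

Definition add_dominant : rel letter := fun a b =>
  [|| D a b, (a == h) && (b \in h :: A) | (b == h) && (a \in h :: A)].

Lemma sub_add_dominant : subrel D add_dominant.
Proof. by move=> a b Dab; rewrite /add_dominant Dab. Qed.

Lemma add_dominant_dominant : {in h :: A, forall e, add_dominant h e}.
Proof. by move=> e he; rewrite /add_dominant eqxx he orbT. Qed.

Lemma add_dominant_dep_alphabet :
  dep_alphabet A D -> dep_alphabet (h :: A) add_dominant.
Proof.
case=> DA Drefl Dsym; split.
- move=> a b /or3P[/DA/andP[aA bA]|/andP[/eqP-> bhA]|/andP[/eqP-> ahA]].
  + by rewrite !in_cons aA bA !orbT.
  + by rewrite mem_head.
  + by rewrite ahA mem_head.
- move=> a; rewrite in_cons => /predU1P[->|aA].
    exact: add_dominant_dominant (mem_head _ _).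
  by rewrite /add_dominant Drefl.
- move=> a b /or3P[/Dsym Dba|hb|ha]; rewrite /add_dominant.
  + by rewrite Dba.
  + by rewrite hb !orbT.
  + by rewrite ha orbT.
Qed.

Lemma add_dominant_restrict : dep_alphabet A D -> h \notin A ->
  forall a b, D a b = [&& a \in A, b \in A & add_dominant a b].
Proof.
case=> DA _ _ hA a b; case Dab: (D a b).
  by have /andP[-> ->] := DA _ _ Dab; rewrite /add_dominant Dab.
case aA: (a \in A); case bA: (b \in A) => //=.
have [ah bh] : a != h /\ b != h by split; apply: contraNneq hA => <-.
by rewrite /add_dominant Dab (negbTE ah) (negbTE bh).
Qed.

End DominantLetter.

Section NfaPushdown.

Variables (A : seq letter) (D' : rel letter) (h : letter).
Hypothesis h_dominant : {in h :: A, forall e, D' h e}.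
Variables (S : finType) (init fin : pred S) (tr : S -> letter -> S -> bool).

Definition nfa_lang (v : word) : Prop :=
  all (mem A) v /\ exists2 s, init s & nfa_acc fin tr s v.

(* [inl true] is the start state, [inl false] the final state, and [inr s]
   simulates the automaton in state [s]. *)
Definition pd_state : finType := (bool + S)%type.

Definition nfa_rule (r : rule pd_state) : bool :=
  let: (p, a, w, q) := r in
  (a == h) &&
  match p, q with
  | inl true, inr f => (w == [:: h]) && fin f
  | inr s', inr s => if w is [:: c; b] then [&& c == h, b \in A & tr s b s'] else false
  | inr s, inl false => (w == [::]) && init s
  | _, _ => false
  end.

Definition nfa_rules : seq (rule pd_state) :=
  let words := [:: [::], [:: h] & [seq [:: h; b] | b <- A]] in
  [seq r <- [seq (p, h, wq.1, wq.2) | p <- enum pd_state,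
                                      wq <- [seq (w, q) | w <- words, q <- enum pd_state]]
   | nfa_rule r].

Lemma mem_nfa_rules r : (r \in nfa_rules) = nfa_rule r.
Proof.
rewrite mem_filter; apply: andb_idr; case: r => [[[p a] w] q] /andP[/eqP-> Hr].
apply/allpairsP; exists (p, (w, q)); rewrite mem_enum; split=> //.
apply/allpairsP; exists (w, q); rewrite mem_enum; split=> //; rewrite /= !in_cons.
case: p q Hr => [[]|s'] [[]|s] //=; first by case/andP => /eqP->; rewrite eqxx orbT.
- by case/andP => /eqP->; rewrite eqxx.
- by case: w => [|c [|b []]] //= /and3P[/eqP-> bA _]; rewrite map_f ?orbT.
Qed.

Lemma nfa_rules_trace_pushdown : trace_pushdown (h :: A) D' nfa_rules.
Proof.
apply: trace_pushdown_dominant_top (mem_head _ _) h_dominant _ => p a w q.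
rewrite mem_nfa_rules /= => /andP[-> Hr] /=.
case: p q Hr => [[]|s'] [[]|s] //=; first by case/andP => /eqP-> _; rewrite /= mem_head.
- by case/andP => /eqP->.
- by case: w => [|c [|b []]] //= /and3P[/eqP-> bA _]; rewrite mem_head in_cons bA orbT.
Qed.

Definition nfa_inv (c : pd_state * word) : Prop :=
  match c with
  | (inl true, u) => trace_eq D' u [:: h]
  | (inl false, u) => exists2 v, nfa_lang v & trace_eq D' u v
  | (inr s, u) => exists2 v, all (mem A) v && nfa_acc fin tr s v & trace_eq D' u (h :: v)
  end.

Lemma nfa_inv_trace_eq p u v : trace_eq D' u v -> nfa_inv (p, u) -> nfa_inv (p, v).
Proof.
move=> Huv; have Hvu := trace_eq_sym Huv.
case: p => [[]|s] /=; first exact: trace_eq_trans Hvu.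
- by case=> w Hw Huw; exists w => //; apply: trace_eq_trans Huw.
- by case=> w Hw Huw; exists w => //; apply: trace_eq_trans Huw.
Qed.

Lemma nfa_inv_step c d : pd_step D' nfa_rules c d -> nfa_inv c -> nfa_inv d.
Proof.
case: c d => [p u] [q u'] [p0 [a [w [q0 [x [+ [/= Ep [/= Eq [Hu Hu']]]]]]]]].
subst p0 q0; rewrite mem_nfa_rules /= => /andP[/eqP Eah Hr]; subst a.
have cancel v : trace_eq D' u (h :: v) -> trace_eq D' x v.
  move=> Huv; apply: trace_eq_cons_cancel (h_dominant (mem_head _ _)) _.
  exact: trace_eq_trans (trace_eq_sym Hu) Huv.
case: p q Hr => [[]|s'] [[]|s] //=.
- case/andP => /eqP Ew fs /(cancel [::]) Hx; subst w; exists [::] => //.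
  exact: trace_eq_trans Hu' (trace_eq_catl [:: h] Hx).
- case/andP => /eqP Ew ins [v /andP[vA accv] /cancel Hxv]; subst w.
  by exists v; [split=> //; exists s' | exact: trace_eq_trans Hu' Hxv].
- case: w Hu' => [|c [|b []]] //= Hu' /and3P[/eqP Ec bA tsbs'] [v /andP[vA accv] /cancel Hxv].
  subst c; exists (b :: v); first by rewrite /= bA vA; apply/existsP; exists s'; rewrite tsbs'.
  exact: trace_eq_trans Hu' (trace_eq_catl [:: h; b] Hxv).
Qed.

Lemma nfa_reach_push s v : all (mem A) v -> nfa_acc fin tr s v ->
  pd_reach D' nfa_rules (inl true, [:: h]) (inr s, h :: v).
Proof.
elim: v s => [|b v IH] s /=.
  move=> _ fs; have r : (inl true, h, [:: h], inr s) \in nfa_rules.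
    by rewrite mem_nfa_rules /= !eqxx fs.
  exact: (pd_reach_rule D' [::] r).
case/andP=> bA vA /existsP[s' /andP[tsbs' accv]].
have r : (inr s', h, [:: h; b], inr s) \in nfa_rules.
  by rewrite mem_nfa_rules /= !eqxx bA tsbs'.
exact: pd_reach_trans (IH s' vA accv) (pd_reach_rule D' v r).
Qed.

Lemma nfa_reach_final w :
  pd_reach D' nfa_rules (inl true, [:: h]) (inl false, w) <->
  exists2 v, nfa_lang v & trace_eq D' w v.
Proof.
split.
  move=> /(pd_reach_inv (P := nfa_inv) nfa_inv_trace_eq nfa_inv_step); apply.
  exact: trace_eq_refl.
case=> v [vA [s ins accv]] Hwv.
have r : (inr s, h, [::], inl false) \in nfa_rules by rewrite mem_nfa_rules /= !eqxx ins.
apply: pd_reach_trans (nfa_reach_push vA accv) _.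
exact: pd_reach_trans (pd_reach_rule D' v r) (pd_reach_trace_eq _ _ (trace_eq_sym Hwv)).
Qed.

End NfaPushdown.

Theorem proposition6p2 (A : seq letter) (D : rel letter) (L : word -> Prop) :
  dep_alphabet A D ->
  rational_trace_lang A D L ->
  exists (A' : seq letter) (D' : rel letter),
    [/\ dep_alphabet A' D', {subset A <= A'} &
        (forall a b, D a b = [&& a \in A, b \in A & D' a b])] /\
    exists (Q : finType) (Delta : seq (rule Q)) (c : Q * word) (q : Q),
      [/\ trace_pushdown A' D' Delta, all (mem A') c.2 &
          forall w, L w <->
            exists2 w', all (mem A) w' /\ trace_eq D w' w & pd_reach D' Delta c (q, w')].
Proof.
move=> HD [L0 [[S [init [fin [tr HL0]]]] HL]].
pose h := fresh_letter A; pose D' := add_dominant A D h.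
have h_dominant : {in h :: A, forall e, D' h e} := @add_dominant_dominant A D h.
exists (h :: A), D'; split.
  split; first exact: add_dominant_dep_alphabet.
  - by move=> a aA; rewrite in_cons aA orbT.
  - exact: add_dominant_restrict (fresh_letter_notin A).
exists _, (nfa_rules A h init fin tr), (inl true, [:: h]), (inl false); split.
- exact: nfa_rules_trace_pushdown.
- by rewrite /= mem_head.
move=> w; split.
  case/HL=> w0 /HL0 Hw0 Hw0w; exists w0; first by case: Hw0.
  by apply/(nfa_reach_final h_dominant); exists w0 => //; apply: trace_eq_refl.
case=> w' [_ Hw'w] /(nfa_reach_final h_dominant) [v Hv Hw'v].
apply/HL; exists v; first exact/HL0.
have Hvw' := trace_eq_subdep (@sub_add_dominant A D h) (trace_eq_sym Hw'v).
exact: trace_eq_trans Hvw' Hw'w.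
Qed.
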